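(* Let $\phi:\mathbb{N}_0\to\mathbb{N}_0$ satisfy $\phi(0)=0$ and $\phi(x)\neq x$ for all $x\in\mathbb{N}$, and let $n\ge2$. Assume the local function $\phi_n$ has no cycle. Let $p_\nu=|\{x\in D_n: h(x)=\nu\}|$ for $1\le\nu\le n$, let $m=\max\{\nu\in\{1,\dots,n\}: p_\nu\ge1\}$, and $\pi=(p_1,\dots,p_m)$. Then $\pi$ is an ordered partition (composition) of $n$ of length $m$, $1\le m\le n$, with $p_1,\dots,p_m\ge1$. Moreover: (1) $M_n(\phi)$ is nilpotent of degree $m$. (2) For $1\le k\le m$, \[ M_n(\phi)^k=\sum_{x\in D_n:\ \phi_n^k(x)\in D_n} E_n(\phi_n^k(x),x),\qquad \#M_n(\phi)^k=n-\sum_{\nu=1}^k p_\nu. \] (3) Writing $\widehat{M}_n(\phi)^{-1}=(\mathbf{v}_1,\dots,\mathbf{v}_n)$ by columns, we have $\mathbf{v}_j=\mathbf{e}_j+\sum_{\nu=1}^{h(j)-1}\mathbf{e}_{\phi_n^\nu(j)}$ for $1\le j\le n$, and \[ \#\widehat{M}_n(\phi)^{-1}=\sum_{x\in D_n}h(x)=\sum_{\nu=1}^m\nu p_\nu\le nm-\binom{m}{2}. \]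
   Context: $\mathbb{N}=\{1,2,\dots\}$, $\mathbb{N}_0=\mathbb{N}\cup\{0\}$, $D_n=\{1,\dots,n\}$, $D_{n,0}=D_n\cup\{0\}$. The local function $\phi_n:D_{n,0}\to D_{n,0}$ is $\phi_n(x)=\phi(x)$ if $x\in D_n$ and $\phi(x)\in D_n$, and $\phi_n(x)=0$ otherwise. ''$\phi_n$ has no cycle'' means there are no $m\ge2$ and $x\in D_n$ with $\phi_n^m(x)=x$. The height of $x\in D_n$ is $h(x)=\min\{k\in\mathbb{N}:\phi_n^k(x)=0\}$. For $1\le i\le n$, $\mathbf{e}_i$ is the $i$-th unit vector in $\mathbb{Z}^n$ and $\mathbf{e}_0$ the zero vector; $E_n(i,j)=\mathbf{e}_i\mathbf{e}_j^t$. $M_n(\phi)$ is the $n\times n$ matrix whose $j$-th column is $\mathbf{e}_{\phi_n(j)}$, and $\widehat{M}_n(\phi)=I-M_n(\phi)$. $\#A$ denotes the number of nonzero entries of a matrix $A$. A matrix $A$ is nilpotent of degree $k$ if $A^k=0$ and $A^{k-1}\ne0$. *)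

From HB Require Import structures.
From mathcomp Require Import all_boot all_order all_algebra.
Set Implicit Arguments. Unset Strict Implicit. Unset Printing Implicit Defensive.
Import GRing.Theory Num.Theory.
Local Open Scope ring_scope.

(* Indices: the paper's D_n = {1,...,n}; matrix index i : 'I_n corresponds to i.+1. *)

Definition phin (n : nat) (phi : nat -> nat) (x : nat) : nat :=
  if ((1 <= x <= n) && (1 <= phi x <= n))%N then phi x else 0%N.

(* height h(x) = min {k >= 1 : phi_n^k x = 0}, searched in 1..n
   (under the no-cycle hypothesis the height of every x in D_n is <= n;
    the value n.+1 is returned if no such k <= n exists) *)
Definition height (n : nat) (phi : nat -> nat) (x : nat) : nat :=
  (find (fun k => iter k (phin n phi) x == 0%N) (iota 1 n)).+1.

Definition no_cycle (n : nat) (phi : nat -> nat) : Prop :=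
  ~ (exists (k x : nat), (2 <= k)%N /\ (1 <= x <= n)%N /\ iter k (phin n phi) x = x).

(* unit vector e_i in Z^n (e_0 = 0 and e_i = 0 for i > n) *)
Definition evec (n i : nat) : 'cV[int]_n := \col_(r < n) ((r.+1 == i)%:R).

Definition Emat (n i j : nat) : 'M[int]_n := evec n i *m (evec n j)^T.

Definition Mphi (n : nat) (phi : nat -> nat) : 'M[int]_n :=
  \matrix_(i < n, j < n) ((i.+1 == phin n phi j.+1)%:R).

Definition Mhat (n : nat) (phi : nat -> nat) : 'M[int]_n := 1%:M - Mphi n phi.

Definition nnz (n : nat) (A : 'M[int]_n) : nat :=
  #|[set ij : 'I_n * 'I_n | A ij.1 ij.2 != 0]|.

Definition nilpotent_deg (n : nat) (A : 'M[int]_n) (k : nat) : Prop :=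
  A ^+ k = 0 /\ A ^+ k.-1 != 0.

Definition pcount (n : nat) (phi : nat -> nat) (nu : nat) : nat :=
  #|[set x : 'I_n | height n phi x.+1 == nu]|.

Definition mmax (n : nat) (phi : nat -> nat) : nat :=
  (\max_(1 <= nu < n.+1 | (0 < pcount n phi nu)%N) nu)%N.

From mathcomp Require Import all_boot all_order all_algebra.
From mathcomp Require Import zify.
Import GRing.Theory Num.Theory.
Local Open Scope ring_scope.

(* Since phi_n has neither fixed points nor cycles, the orbit x, phi_n x,
   phi_n^2 x, ... of a point x of D_n runs through distinct points of D_n until
   it falls into 0; by pigeonhole this happens after h(x) <= n steps, and the
   height drops by one at each step, so every height 1, ..., m is attained.
   The matrix M = M_n(phi) sends e_j to e_{phi_n(j)}, hence M^k e_j =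
   e_{phi_n^k(j)}: this gives the entries of M^k, its nilpotency degree m and
   its number of nonzero entries.  As M^m = 0, I - M is inverted by the finite
   geometric series sum_{k<m} M^k, whose j-th column is the sum of the h(j)
   distinct unit vectors e_{phi_n^k(j)}, k < h(j). *)

Lemma sum_ord_succ_eq n c : (\sum_(i < n) (i.+1 == c) = (1 <= c <= n))%N.
Proof.
elim: n => [|n IH]; first by rewrite big_ord0; case: c.
by rewrite big_ord_recr /= IH; lia.
Qed.

Lemma sum_ord_succ_mem {n} {s : seq nat} :
  uniq s -> all (fun c => 1 <= c <= n)%N s ->
  (\sum_(i < n) (i.+1 \in s) = size s)%N.
Proof.
elim: s => [|c s IH] /=; first by rewrite big1.
move=> /andP[cNs s_uniq] /andP[c_in s_in].
have -> : (size s).+1 = ((1 <= c <= n) + size s)%N by rewrite c_in.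
rewrite -sum_ord_succ_eq -(IH s_uniq s_in) -big_split.
apply: eq_bigr => i _; rewrite in_cons.
by case: eqP => [->|] //=; rewrite (negbTE cNs).
Qed.

Lemma sum_nat_eq_mul a b c (g : nat -> nat) :
  (\sum_(a <= nu < b) (c == nu) * g nu = (a <= c < b) * g c)%N.
Proof.
case c_in: (a <= c < b)%N.
  rewrite (bigD1_seq c) ?mem_index_iota ?iota_uniq //= eqxx !mul1n.
  by rewrite big1 ?addn0 // => nu; rewrite eq_sym => /negbTE ->.
rewrite big_nat_cond big1 // => nu /andP[nu_in _].
by case: eqP c_in => // ->; rewrite nu_in.
Qed.

Lemma sum_eq_count_map (c : nat) (g : nat -> nat) r :
  (\sum_(k <- r) (c == g k))%N = count_mem c (map g r).
Proof. by elim: r => [|a r IH]; rewrite ?big_nil ?big_cons //= IH eq_sym. Qed.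

Lemma sum_sub_bin2 m : (\sum_(1 <= nu < m.+1) (m - nu) = 'C(m, 2))%N.
Proof.
elim: m => [|m IH]; first by rewrite big_geq.
rewrite big_nat_recl // (eq_bigr (fun nu => m - nu)%N) => [|nu _]; last by rewrite subSS.
by rewrite IH binS bin1 subSS subn0 addnC.
Qed.

Lemma nilpotent_mul1B_sum_expr (R : pzRingType) (x : R) m :
  x ^+ m = 0 -> (1 - x) * \sum_(k < m) x ^+ k = 1.
Proof. by move=> xm0; rewrite -opprB mulNr -subrX1 xm0 sub0r opprK. Qed.

Lemma exists_ord_succ {n y} : (1 <= y <= n)%N -> exists x : 'I_n, x.+1 = y.
Proof.
by case: y => // y y_le; exists (Ordinal y_le).
Qed.

Lemma ord_succ_in {n} (x : 'I_n) : (1 <= x.+1 <= n)%N.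
Proof. exact: ltn_ord. Qed.

Section LocalFunction.
Variables (phi : nat -> nat) (n : nat).
Hypothesis phi_nofix : forall x : nat, (0 < x)%N -> phi x <> x.
Hypothesis n_gt0 : (0 < n)%N.
Hypothesis hnc : no_cycle n phi.
Local Notation f := (phin n phi).
Local Notation h := (height n phi).

Lemma phin_le x : (f x <= n)%N.
Proof. by rewrite /phin; case: ifP => // /andP[_ /andP[]]. Qed.

Lemma iter_phin0 k : iter k f 0 = 0%N.
Proof. by elim: k => //= k ->. Qed.

Lemma iter_phin_le k x : (x <= n)%N -> (iter k f x <= n)%N.
Proof. by case: k => //= k _; apply: phin_le. Qed.

Lemma iter_phin_repeat [x a b] : (x <= n)%N -> (a < b)%N ->
  iter a f x = iter b f x -> iter a f x = 0%N.
Proof.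
move=> x_le ab E; set y := iter a f x in E *.
have y_cycle : iter (b - a) f y = y by rewrite {2}E /y -iterD subnK // ltnW.
apply/eqP/negPn/negP => y_neq0.
have y_in : (1 <= y <= n)%N by rewrite lt0n y_neq0 iter_phin_le.
have [ba1|ba_neq1] := eqVneq (b - a)%N 1%N.
  move: y_cycle; rewrite ba1 /= /phin y_in /=; case: ifP => _ fy; last first.
    by rewrite -fy eqxx in y_neq0.
  by apply: (phi_nofix y) => //; rewrite lt0n.
apply: hnc; exists (b - a)%N, y; split=> //; lia.
Qed.

Lemma has_iter_phin_eq0 [x] : (1 <= x <= n)%N ->
  has (fun k => iter k f x == 0%N) (iota 1 n).
Proof.
move=> /andP[x_gt0 x_le]; apply/negPn/negP => /hasPn orbit_neq0.
(* Otherwise k |-> phi_n^k x would inject 'I_n.+1 into D_n. *)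
have iter_in (k : 'I_n.+1) : (1 <= iter k f x <= n)%N.
  rewrite iter_phin_le // andbT.
  case: k => [[|k] /= k_le]; first by [].
  by rewrite lt0n (orbit_neq0 k.+1) // mem_iota add1n.
have pred_lt (k : 'I_n.+1) : ((iter k f x).-1 < n)%N by have := iter_in k; lia.
have inj : injective (fun k => Ordinal (pred_lt k)).
  move=> i j [] Eij.
  have E : iter i f x = iter j f x by move: (iter_in i) (iter_in j) Eij; lia.
  case: (ltngtP i j) => [ij|ji|/val_inj//].
    by have := iter_phin_repeat x_le ij E; have := iter_in i; lia.
  by have := iter_phin_repeat x_le ji (esym E); have := iter_in j; lia.
by have := leq_card _ inj; rewrite !card_ord ltnn.
Qed.

Lemma height_le [x] : (1 <= x <= n)%N -> (h x <= n)%N.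
Proof. by move/has_iter_phin_eq0; rewrite has_find size_iota. Qed.

Lemma iter_phin_neq0 [x] k : (1 <= x <= n)%N -> (iter k f x != 0%N) = (k < h x)%N.
Proof.
move=> x_in; have x_has := has_iter_phin_eq0 x_in.
have find_lt := height_le x_in; rewrite /height in find_lt *.
case: k => [|k]; first by rewrite -lt0n; case/andP: x_in.
rewrite ltnS; case: ltnP => k_find.
  have k_lt : (k < n)%N := ltn_trans k_find find_lt.
  by have := before_find 0 k_find; rewrite nth_iota // add1n => ->.
have := nth_find 0 x_has; rewrite nth_iota // add1n => /eqP stop.
by rewrite -(subnK k_find) -addnS iterD stop iter_phin0.
Qed.

Lemma iter_phin_in [x] k : (1 <= x <= n)%N -> (1 <= iter k f x <= n)%N = (k < h x)%N.
Proof.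
move=> x_in; rewrite -iter_phin_neq0 // lt0n iter_phin_le ?andbT //.
by case/andP: x_in.
Qed.

Lemma iter_phin_eq0 [x] k : (1 <= x <= n)%N -> (h x <= k)%N -> iter k f x = 0%N.
Proof. by move=> x_in; rewrite leqNgt -iter_phin_neq0 // negbK => /eqP. Qed.

Lemma height_unique [x] c : (1 <= x <= n)%N ->
  (forall k, (iter k f x != 0%N) = (k < c)%N) -> h x = c.
Proof.
move=> x_in x_c; have [lt|gt|//] := ltngtP (h x) c.
  by have := x_c (h x); rewrite iter_phin_neq0 // ltnn lt.
by have := x_c c; rewrite iter_phin_neq0 // ltnn gt.
Qed.

Lemma height_iter [x] k : (1 <= x <= n)%N -> (k < h x)%N ->
  h (iter k f x) = (h x - k)%N.
Proof.
move=> x_in k_lt; apply: height_unique; first by rewrite iter_phin_in.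
by move=> j; rewrite -iterD iter_phin_neq0 //; lia.
Qed.

Lemma orbit_uniq [x] : (1 <= x <= n)%N -> uniq [seq iter k f x | k <- iota 0 (h x)].
Proof.
move=> x_in; have x_le : (x <= n)%N by case/andP: x_in.
rewrite map_inj_in_uniq ?iota_uniq // => a b.
rewrite !mem_iota !add0n => /= a_lt b_lt E.
have [ab|ba|//] := ltngtP a b.
  by move: (iter_phin_neq0 a x_in); rewrite a_lt (iter_phin_repeat x_le ab E).
by move: (iter_phin_neq0 b x_in); rewrite b_lt (iter_phin_repeat x_le ba (esym E)).
Qed.

Lemma orbit_in [x] : (1 <= x <= n)%N ->
  all (fun y => 1 <= y <= n)%N [seq iter k f x | k <- iota 0 (h x)].
Proof.
move=> x_in; apply/allP => y /mapP[k]; rewrite mem_iota add0n => /= k_lt ->.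
by rewrite iter_phin_in.
Qed.

Definition max_height := (\max_(x < n) h x.+1)%N.

Lemma leq_height_max (x : 'I_n) : (h x.+1 <= max_height)%N.
Proof. exact: leq_bigmax. Qed.

Lemma max_height_attained : exists x : 'I_n, h x.+1 = max_height.
Proof.
have [|x x_max] := eq_bigmax (fun x : 'I_n => h x.+1); first by rewrite card_ord.
by exists x; rewrite /max_height x_max.
Qed.

Lemma max_height_in : (1 <= max_height <= n)%N.
Proof.
have [x <-] := max_height_attained.
by rewrite height_le ?ord_succ_in // andbT.
Qed.

Lemma height_attained nu : (1 <= nu <= max_height)%N ->
  exists x : 'I_n, h x.+1 = nu.
Proof.
move=> nu_in; have [x x_max] := max_height_attained.
have k_lt : (max_height - nu < h x.+1)%N by rewrite x_max; lia.
have y_in : (1 <= iter (max_height - nu) f x.+1 <= n)%N.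
  by rewrite iter_phin_in ?ord_succ_in.
have [y y_def] := exists_ord_succ y_in.
by exists y; rewrite y_def height_iter ?ord_succ_in // x_max; lia.
Qed.

Lemma pcount_gt0 nu : (0 < pcount n phi nu)%N = [exists x : 'I_n, h x.+1 == nu].
Proof.
by apply/card_gt0P/existsP => -[x]; rewrite ?inE => x_nu; exists x; rewrite ?inE.
Qed.

Lemma pcount_ge1 nu : (1 <= nu <= max_height)%N -> (1 <= pcount n phi nu)%N.
Proof.
by case/height_attained => x x_nu; rewrite pcount_gt0; apply/existsP; exists x; rewrite x_nu.
Qed.

Lemma mmax_max_height : mmax n phi = max_height.
Proof.
apply/eqP; rewrite eqn_leq; apply/andP; split.
  apply/bigmax_leqP_seq => nu _; rewrite pcount_gt0 => /existsP[x /eqP <-].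
  exact: leq_height_max.
apply: (leq_bigmax_seq (F := id)); first by rewrite mem_index_iota ltnS max_height_in.
by rewrite /= pcount_ge1 // leqnn andbT; case/andP: max_height_in.
Qed.

Lemma pcount_sum nu : pcount n phi nu = (\sum_(x < n) (h x.+1 == nu))%N.
Proof.
rewrite /pcount -sum1_card big_mkcond /=; apply: eq_bigr => x _.
by rewrite inE; case: eqP.
Qed.

Lemma sum_mul_pcount (g : nat -> nat) k :
  (\sum_(1 <= nu < k.+1) g nu * pcount n phi nu =
   \sum_(x < n) (h x.+1 < k.+1) * g (h x.+1))%N.
Proof.
under eq_bigr => nu _ do rewrite pcount_sum big_distrr.
rewrite exchange_big /=; apply: eq_bigr => x _.
have := sum_nat_eq_mul 1 k.+1 (h x.+1) g; rewrite /= => <-.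
by apply: eq_bigr => nu _; rewrite mulnC.
Qed.

Lemma height_in_max (x : 'I_n) : (h x.+1 < max_height.+1)%N.
Proof. by rewrite ltnS leq_height_max. Qed.

Lemma sum_pcount : (\sum_(1 <= nu < max_height.+1) pcount n phi nu)%N = n.
Proof.
under eq_bigr => nu _ do rewrite -[pcount _ _ _]mul1n.
rewrite (sum_mul_pcount (fun=> 1%N)) -[RHS]card_ord -sum1_card.
by apply: eq_bigr => x _; rewrite height_in_max.
Qed.

Lemma sum_height :
  (\sum_(x < n) h x.+1 = \sum_(1 <= nu < max_height.+1) nu * pcount n phi nu)%N.
Proof.
by rewrite (sum_mul_pcount id); apply: eq_bigr => x _; rewrite height_in_max mul1n.
Qed.

Lemma sum_height_bound :
  (\sum_(1 <= nu < max_height.+1) nu * pcount n phi nu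
     <= n * max_height - 'C(max_height, 2))%N.
Proof.
set m := max_height.
set S := (\sum_(1 <= nu < m.+1) nu * pcount n phi nu)%N.
set S' := (\sum_(1 <= nu < m.+1) (m - nu) * pcount n phi nu)%N.
have S_S' : (S + S' = n * m)%N.
  rewrite -[in RHS]sum_pcount mulnC big_distrr -big_split /=.
  rewrite big_nat_cond [RHS]big_nat_cond; apply: eq_bigr => nu /andP[/andP[_ nu_le] _].
  by rewrite -mulnDl subnKC // -ltnS.
have bin2_S' : ('C(m, 2) <= S')%N.
  rewrite -sum_sub_bin2 big_nat_cond [leqRHS]big_nat_cond.
  by apply: leq_sum => nu /andP[nu_in _]; rewrite leq_pmulr ?pcount_ge1 // -ltnS.
lia.
Qed.

Local Notation M := (Mphi n phi).

Lemma evec0 : evec n 0 = 0.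
Proof. by apply/matrixP => i j; rewrite !mxE. Qed.

Lemma evecE c (i : 'I_n) (j : 'I_1) : evec n c i j = (i.+1 == c)%:R.
Proof. by rewrite mxE. Qed.

Lemma col_mul_evec (A : 'M[int]_n) (j : 'I_n) : col j A = A *m evec n j.+1.
Proof.
rewrite colE; congr (_ *m _); apply/matrixP => i k.
by rewrite !mxE eqSS (ord1 k) eqxx andbT.
Qed.

Lemma EmatE a b (i j : 'I_n) : Emat n a b i j = (i.+1 == a)%:R * (j.+1 == b)%:R.
Proof. by rewrite /Emat !mxE big_ord1 !mxE. Qed.

Lemma Mphi_evec j : M *m evec n j = evec n (f j).
Proof.
apply/matrixP => i k; rewrite !mxE.
under eq_bigr => r _ do rewrite !mxE [_ * _]mulrC.
rewrite (eq_bigr (fun r : 'I_n => (r.+1 == j)%:R * (i.+1 == f j)%:R)) => [|r _].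
  rewrite -big_distrl /= -natr_sum sum_ord_succ_eq.
  by case j_in: (1 <= j <= n)%N; rewrite ?mul1r // mul0r /phin j_in.
by case: (r.+1 =P j) => [<-|_]; rewrite ?mul0r.
Qed.

Lemma Mphi_pow_evec k j : M ^+ k *m evec n j = evec n (iter k f j).
Proof.
elim: k => [|k IH]; first by rewrite expr0 mul1mx.
by rewrite exprS -mulmxE -mulmxA IH Mphi_evec.
Qed.

Lemma Mphi_powE k (i j : 'I_n) : (M ^+ k) i j = (i.+1 == iter k f j.+1)%:R.
Proof.
transitivity (col j (M ^+ k) i 0); first by rewrite mxE.
by rewrite col_mul_evec Mphi_pow_evec mxE.
Qed.

Lemma Mphi_pow_max_height : M ^+ max_height = 0.
Proof.
apply/matrixP => i j; rewrite Mphi_powE mxE iter_phin_eq0 ?ord_succ_in //.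
exact: leq_height_max.
Qed.

Lemma Mphi_pow_pred_max_height_neq0 : M ^+ max_height.-1 != 0.
Proof.
have [x x_max] := max_height_attained.
have y_in : (1 <= iter max_height.-1 f x.+1 <= n)%N.
  by rewrite iter_phin_in ?ord_succ_in // x_max prednK //; case/andP: max_height_in.
have [y y_def] := exists_ord_succ y_in.
apply/negP => /eqP M_eq0.
by have := Mphi_powE max_height.-1 y x; rewrite M_eq0 mxE y_def eqxx.
Qed.

Lemma Mphi_pow_sum_Emat k : M ^+ k =
  \sum_(x < n | (1 <= iter k f x.+1 <= n)%N) Emat n (iter k f x.+1) x.+1.
Proof.
apply/matrixP => i j; rewrite summxE Mphi_powE.
have Emat_col (x : 'I_n) : x != j -> Emat n (iter k f x.+1) x.+1 i j = 0.
  by move=> x_neq; rewrite EmatE eqSS val_eqE [j == x]eq_sym (negbTE x_neq) mulr0.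
case j_in: (1 <= iter k f j.+1 <= n)%N.
  rewrite (bigD1 j) //= EmatE eqxx mulr1 big1 ?addr0 // => x /andP[_].
  exact: Emat_col.
rewrite big1 => [|x x_in]; last by apply: Emat_col; apply: contraFneq j_in => <-.
suff -> : iter k f j.+1 = 0%N by [].
by have := iter_phin_le k j.+1 (ltn_ord j); move: j_in; lia.
Qed.

Lemma nnz_sum (A : 'M[int]_n) : nnz A = (\sum_(j < n) \sum_(i < n) (A i j != 0))%N.
Proof.
rewrite /nnz -sum1_card big_mkcond /= exchange_big pair_bigA /=.
by apply: eq_bigr => ij _; rewrite inE; case: (_ != _).
Qed.

Lemma nnz_Mphi_pow k :
  nnz (M ^+ k) = (n - \sum_(1 <= nu < k.+1) pcount n phi nu)%N.
Proof.
have col_nnz (j : 'I_n) : (\sum_(i < n) ((M ^+ k) i j != 0) = (k < h j.+1))%N.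
  under eq_bigr => i _ do rewrite Mphi_powE pnatr_eq0 eqb0 negbK.
  by rewrite sum_ord_succ_eq iter_phin_in ?ord_succ_in.
under eq_bigr => nu _ do rewrite -[pcount _ _ _]mul1n.
rewrite nnz_sum (eq_bigr _ (fun j _ => col_nnz j)) (sum_mul_pcount (fun=> 1%N)).
have split_n : (\sum_(j < n) (k < h j.+1) + \sum_(j < n) (h j.+1 < k.+1) * 1 = n)%N.
  rewrite -big_split -[RHS]card_ord -sum1_card; apply: eq_bigr => j _.
  by rewrite muln1 ltnS; case: leqP.
by rewrite -[X in _ = (X - _)%N]split_n addnK.
Qed.

Lemma Mhat_mul_sum_Mphi_pow : Mhat n phi *m \sum_(k < max_height) M ^+ k = 1%:M.
Proof. by rewrite mulmxE idmxE nilpotent_mul1B_sum_expr // Mphi_pow_max_height. Qed.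

Lemma Mhat_unit : Mhat n phi \in unitmx.
Proof. by have [] := mulmx1_unit Mhat_mul_sum_Mphi_pow. Qed.

Lemma invmx_Mhat : invmx (Mhat n phi) = \sum_(k < max_height) M ^+ k.
Proof.
by rewrite -[LHS]mulmx1 -Mhat_mul_sum_Mphi_pow mulmxA mulVmx ?Mhat_unit // mul1mx.
Qed.

Lemma col_invmx_Mhat (j : 'I_n) :
  col j (invmx (Mhat n phi)) = \sum_(0 <= k < h j.+1) evec n (iter k f j.+1).
Proof.
rewrite col_mul_evec invmx_Mhat mulmx_suml.
under eq_bigr do rewrite Mphi_pow_evec.
rewrite -(big_mkord xpredT (fun k => evec n (iter k f j.+1))).
rewrite (@big_cat_nat _ _ _ (h j.+1)) ?leq_height_max //= [X in _ + X]big1_seq ?addr0 //.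
move=> k /andP[_]; rewrite mem_index_iota => /andP[k_ge _].
by rewrite iter_phin_eq0 ?ord_succ_in ?evec0.
Qed.

Lemma nnz_invmx_Mhat : nnz (invmx (Mhat n phi)) = (\sum_(x < n) h x.+1)%N.
Proof.
rewrite nnz_sum; apply: eq_bigr => j _.
set s := [seq iter k f j.+1 | k <- iota 0 (h j.+1)].
rewrite -[h j.+1](size_iota 0) -(size_map (fun k => iter k f j.+1)) -/s.
rewrite -(sum_ord_succ_mem (orbit_uniq (ord_succ_in j)) (orbit_in (ord_succ_in j))).
apply: eq_bigr => i _.
transitivity (col j (invmx (Mhat n phi)) i 0 != 0 : nat); first by rewrite mxE.
rewrite col_invmx_Mhat summxE.
under eq_bigr do rewrite evecE.
by rewrite -natr_sum pnatr_eq0 sum_eq_count_map -/s -lt0n -has_count has_pred1.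
Qed.
End LocalFunction.

Theorem theorem1p7 (phi : nat -> nat) (n : nat)
  (phi0 : phi 0%N = 0%N)
  (phi_nofix : forall x : nat, (0 < x)%N -> phi x <> x)
  (hn : (2 <= n)%N)
  (hnc : no_cycle n phi) :
  let p := pcount n phi in
  let m := mmax n phi in
  let h := height n phi in
  let f := phin n phi in
  (* pi = (p_1,...,p_m) is a composition of n of length m *)
  [/\ [/\ (\sum_(1 <= nu < m.+1) p nu)%N = n,
          (1 <= m <= n)%N &
          (forall nu : nat, (1 <= nu <= m)%N -> (1 <= p nu)%N)],
  (* (1) *)
      nilpotent_deg (Mphi n phi) m,
  (* (2) *)
      (forall k : nat, (1 <= k <= m)%N ->
         Mphi n phi ^+ k =
           \sum_(x < n | (1 <= iter k f x.+1 <= n)%N) Emat n (iter k f x.+1) x.+1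
         /\ nnz (Mphi n phi ^+ k) = (n - \sum_(1 <= nu < k.+1) p nu)%N) &
  (* (3) *)
      [/\ Mhat n phi \in unitmx,
          (forall j : 'I_n,
             col j (invmx (Mhat n phi)) =
               evec n j.+1 + \sum_(1 <= nu < h j.+1) evec n (iter nu f j.+1)),
          nnz (invmx (Mhat n phi)) = (\sum_(x < n) h x.+1)%N,
          (\sum_(x < n) h x.+1)%N = (\sum_(1 <= nu < m.+1) nu * p nu)%N &
          ((\sum_(1 <= nu < m.+1) nu * p nu) <= n * m - 'C(m, 2))%N]].
Proof.
move=> p m h f; have n_gt0 : (0 < n)%N := ltnW hn.
rewrite /p /m /h /f mmax_max_height //; split.
- by split; [apply: sum_pcount | apply: max_height_in | apply: pcount_ge1].
- by split; [apply: Mphi_pow_max_height | apply: Mphi_pow_pred_max_height_neq0].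
- by move=> k _; split; [apply: Mphi_pow_sum_Emat | apply: nnz_Mphi_pow].
split; [by apply: Mhat_unit | | by apply: nnz_invmx_Mhat
       | by apply: sum_height | by apply: sum_height_bound].
by move=> j; rewrite col_invmx_Mhat // big_ltn.
Qed.
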